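(* Let $k=\mathbb{F}_q$ with $q$ odd, $q>3$, let $n\ge1$, $A=M_{2n}(k)$, $J_{2n}=\begin{pmatrix}0&I_n\\-I_n&0\end{pmatrix}$, and $a^{\sim}=J_{2n}a^{t}J_{2n}^{-1}$ for $a\in A$. Let $V=k^{2n}$ (row vectors, with $A$ acting on the right), and let $[x,y]=\langle x,yJ_{2n}\rangle$ where $\langle\cdot,\cdot\rangle$ is the standard dot product. For every $u\in A^{\times}$ with $u^{\sim}=u$, the map $Q_u:V^2\to k$, $Q_u((x,y))=[xu,y]$, is a nondegenerate split quadratic form on the $4n$-dimensional $k$-vector space $V^2$. Moreover, for any two such $u,u'\in A^{\times}$ with $u^{\sim}=u$, $u'^{\sim}=u'$, the quadratic forms $Q_u$ and $Q_{u'}$ are equivalent.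
   Context: A quadratic form on a finite-dimensional vector space over a field of odd characteristic is nondegenerate if its associated symmetric bilinear form is nondegenerate, and split if it is equivalent to an orthogonal sum of hyperbolic planes. Two quadratic forms $Q,Q'$ on $V^2$ are equivalent if $Q'=Q\circ g$ for some linear automorphism $g$. *)

From HB Require Import structures.
From mathcomp Require Import all_boot all_order all_algebra all_field.
Set Implicit Arguments. Unset Strict Implicit. Unset Printing Implicit Defensive.
Import GRing.Theory Num.Theory.
Local Open Scope ring_scope.

Section QF.
Variable k : fieldType.

Definition is_quadratic_form m (Q : 'rV[k]_m -> k) : Prop :=
  exists M : 'M[k]_m, forall x, Q x = (x *m M *m x^T) 0 0.

Definition polar m (Q : 'rV[k]_m -> k) (x y : 'rV[k]_m) : k :=
  Q (x + y) - Q x - Q y.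

Definition qf_nondegenerate m (Q : 'rV[k]_m -> k) : Prop :=
  forall x, (forall y, polar Q x y = 0) -> x = 0.

Definition qf_equiv m (Q Q' : 'rV[k]_m -> k) : Prop :=
  exists g : 'M[k]_m, g \in unitmx /\ forall v, Q' v = Q (v *m g).

(* orthogonal sum of hyperbolic planes: x_0 x_1 + x_2 x_3 + ... *)
Definition hyperbolic_form m (v : 'rV[k]_m) : k :=
  \sum_(i < m) \sum_(j < m | ~~ odd i && (nat_of_ord j == i.+1)) v 0 i * v 0 j.

Definition qf_split m (Q : 'rV[k]_m -> k) : Prop :=
  ~~ odd m /\ qf_equiv Q (@hyperbolic_form m).

Definition Jmx n : 'M[k]_(n + n) := block_mx 0 1%:M (- 1%:M) 0.

Definition sym_tilde n (a : 'M[k]_(n + n)) : 'M[k]_(n + n) :=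
  Jmx n *m a^T *m invmx (Jmx n).

Definition symp n (x y : 'rV[k]_(n + n)) : k := (x *m (y *m Jmx n)^T) 0 0.

Definition Qu n (u : 'M[k]_(n + n)) (v : 'rV[k]_((n + n) + (n + n))) : k :=
  symp (lsubmx v *m u) (rsubmx v).

End QF.

(* Q_u is the pairing form (x, y) |-> x N y^T with N = u J^T invertible.
   Such a form is nondegenerate because N is, and the substitution
   (x, y) |-> (x, y N^-T) turns it into x y^T = x_0 y_0 + ... + x_(m-1) y_(m-1),
   which is a sum of hyperbolic planes once the coordinates of x and y are
   interleaved.  So all the Q_u are equivalent to one split form. *)

From HB Require Import structures.
From mathcomp Require Import all_boot all_order all_algebra all_field.
From mathcomp Require Import perm zify ring.
Import GRing.Theory.
Set Implicit Arguments. Unset Strict Implicit.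
Local Open Scope ring_scope.

Section QuadraticForms.
Variable k : fieldType.

Lemma qf_equiv_trans m (Q1 Q2 Q3 : 'rV[k]_m -> k) :
  qf_equiv Q1 Q2 -> qf_equiv Q2 Q3 -> qf_equiv Q1 Q3.
Proof.
move=> [g [gU eQ2]] [h [hU eQ3]]; exists (h *m g); split.
  by rewrite unitmx_mul hU gU.
by move=> v; rewrite eQ3 eQ2 mulmxA.
Qed.

Lemma qf_equiv_sym m (Q1 Q2 : 'rV[k]_m -> k) :
  qf_equiv Q1 Q2 -> qf_equiv Q2 Q1.
Proof.
move=> [g [gU eQ2]]; exists (invmx g); split; first by rewrite unitmx_inv.
by move=> v; rewrite eQ2 mulmxKV.
Qed.

Definition pairing_form m (N : 'M[k]_m) (v : 'rV[k]_(m + m)) : k :=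
  (lsubmx v *m N *m (rsubmx v)^T) 0 0.

Lemma pairing_form_quadratic m (N : 'M[k]_m) : is_quadratic_form (pairing_form N).
Proof.
exists (block_mx 0 N 0 0) => v.
rewrite /pairing_form -[in RHS](hsubmxK v) mul_row_block tr_row_mx mul_row_col.
by rewrite ?mul0mx ?mulmx0 ?addr0 ?add0r (mul0mx _ (lsubmx v)^T) add0r.
Qed.

Lemma polar_pairing_form m (N : 'M[k]_m) v w :
  polar (pairing_form N) v w = pairing_form N (row_mx (lsubmx v) (rsubmx w))
                             + pairing_form N (row_mx (lsubmx w) (rsubmx v)).
Proof.
rewrite /polar /pairing_form !row_mxKl !row_mxKr !linearD /= !mulmxDl ?mulmxDr.
by rewrite !mxE; ring.
Qed.

Lemma row_mul_tr_eq0 m (a : 'rV[k]_m) :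
  (forall y : 'rV[k]_m, (a *m y^T) 0 0 = 0) -> a = 0.
Proof.
move=> a_y0; apply/rowP => j; have := a_y0 (delta_mx 0 j).
rewrite mxE (bigD1 j) //= big1 => [|i ij]; last first.
  by rewrite !mxE eqxx /= (negbTE ij) mulr0.
by rewrite !mxE !eqxx mulr1 addr0 => ->.
Qed.

Lemma pairing_form_nondegenerate m (N : 'M[k]_m) :
  N \in unitmx -> qf_nondegenerate (pairing_form N).
Proof.
move=> NU v v_rad.
have {}v_rad w1 w2 : pairing_form N (row_mx (lsubmx v) w2)
                     + pairing_form N (row_mx w1 (rsubmx v)) = 0.
  by rewrite -(v_rad (row_mx w1 w2)) polar_pairing_form !row_mxKl !row_mxKr.
have xN0 : lsubmx v *m N = 0.
  apply: row_mul_tr_eq0 => y; have := v_rad 0 y.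
  by rewrite /pairing_form !row_mxKl !row_mxKr !mul0mx [(0 : 'M_1) 0 0]mxE addr0.
have yNT0 : rsubmx v *m N^T = 0.
  apply: row_mul_tr_eq0 => y; have := v_rad y 0.
  rewrite /pairing_form !row_mxKl !row_mxKr trmx0 mulmx0.
  rewrite [(0 : 'M_1) 0 0]mxE add0r => <-.
  rewrite -[y *m _ *m _]trmxK [RHS]mxE.
  by rewrite !trmx_mul !trmxK !mulmxA.
have x0 : lsubmx v = 0 by rewrite -(mulmxK NU (lsubmx v)) xN0 mul0mx.
have y0 : rsubmx v = 0.
  by rewrite -(mulmxK (_ : N^T \in unitmx) (rsubmx v)) ?unitmx_tr // yNT0 mul0mx.
by rewrite -(hsubmxK v) x0 y0 row_mx0.
Qed.

Lemma pairing_form_block_diag m (N A B : 'M[k]_m) v :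
  pairing_form N (v *m block_mx A 0 0 B) = pairing_form (A *m N *m B^T) v.
Proof.
have -> : v *m block_mx A 0 0 B = row_mx (lsubmx v *m A) (rsubmx v *m B).
  by rewrite -{1}(hsubmxK v) mul_row_block !mulmx0 addr0 add0r.
by rewrite /pairing_form row_mxKl row_mxKr trmx_mul !mulmxA.
Qed.

Lemma pairing_form_equiv1 m (N : 'M[k]_m) :
  N \in unitmx -> qf_equiv (pairing_form N) (pairing_form 1%:M).
Proof.
move=> NU; exists (block_mx 1%:M 0 0 (invmx N)^T); split.
  by rewrite block_diag_mx_unit unitmx1 unitmx_tr unitmx_inv NU.
by move=> v; rewrite pairing_form_block_diag trmxK mul1mx mulmxV.
Qed.

Section Interleave.
Variable m : nat.

Definition interleave_nat (j : 'I_(m + m)) : nat :=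
  if (j < m)%N then (2 * j)%N else (2 * (j - m)).+1.

Lemma interleave_nat_lt j : (interleave_nat j < m + m)%N.
Proof. by rewrite /interleave_nat; have := ltn_ord j; case: ifP; lia. Qed.

Definition interleave j : 'I_(m + m) := Ordinal (interleave_nat_lt j).

Lemma interleave_inj : injective interleave.
Proof.
move=> i j /(congr1 val); rewrite /= /interleave_nat => eij; apply/val_inj => /=.
move: eij; have := ltn_ord i; have := ltn_ord j.
by case: ifP => ?; case: ifP => ?; lia.
Qed.

Lemma interleave_nat_lshift i : interleave_nat (lshift m i) = (2 * i)%N.
Proof. by rewrite /interleave_nat /= ltn_ord. Qed.

Lemma interleave_nat_rshift i : interleave_nat (rshift m i) = (2 * i).+1.
Proof. by rewrite /interleave_nat /= ltnNge leq_addr addKn. Qed.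

Lemma hyperbolic_form_interleave v :
  hyperbolic_form v = pairing_form 1%:M (col_perm (perm interleave_inj) v).
Proof.
rewrite /pairing_form mulmx1 mxE /hyperbolic_form (reindex_inj interleave_inj).
rewrite big_split_ord /= [X in _ + X]big1 ?addr0 => [|i _]; last first.
  by rewrite big_pred0 // => j; rewrite interleave_nat_rshift oddS negbK oddM.
apply: eq_bigr => i _; rewrite (big_pred1 (interleave (rshift m i))) => [|j].
  by rewrite !mxE !permE.
by rewrite interleave_nat_lshift oddM /= -[RHS]val_eqE /= interleave_nat_rshift.
Qed.

Lemma pairing_form1_split : qf_split (pairing_form (1%:M : 'M[k]_m)).
Proof.
split; first by rewrite oddD addbb.
exists (perm_mx (perm interleave_inj)^-1); split; first exact: unitmx_perm.
by move=> v; rewrite hyperbolic_form_interleave col_permE.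
Qed.

End Interleave.

Lemma Jmx_unit n : Jmx k n \in unitmx.
Proof.
suff /mulmx1_unit[] : Jmx k n *m (- Jmx k n) = 1%:M by [].
rewrite mulmxN /Jmx mulmx_block !mul0mx !mulmx0 !mul1mx !mulmx1 !add0r !addr0.
by rewrite opp_block_mx !opprK !oppr0 -scalar_mx_block.
Qed.

Lemma QuE n (u : 'M[k]_(n + n)) v : Qu u v = pairing_form (u *m (Jmx k n)^T) v.
Proof. by rewrite /Qu /symp /pairing_form trmx_mul !mulmxA. Qed.

Lemma unitmx_mulJT n (u : 'M[k]_(n + n)) :
  u \in unitmx -> u *m (Jmx k n)^T \in unitmx.
Proof. by move=> uU; rewrite unitmx_mul uU unitmx_tr Jmx_unit. Qed.

Lemma Qu_quadratic n (u : 'M[k]_(n + n)) : is_quadratic_form (Qu u).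
Proof.
have [M eM] := pairing_form_quadratic (u *m (Jmx k n)^T).
by exists M => v; rewrite QuE eM.
Qed.

Lemma Qu_nondegenerate n (u : 'M[k]_(n + n)) :
  u \in unitmx -> qf_nondegenerate (Qu u).
Proof.
move=> uU v v_rad; apply: (pairing_form_nondegenerate (unitmx_mulJT uU)) => w.
by rewrite -(v_rad w) /polar !QuE.
Qed.

Lemma Qu_equiv1 n (u : 'M[k]_(n + n)) :
  u \in unitmx -> qf_equiv (Qu u) (pairing_form 1%:M).
Proof.
move=> uU; have [g [gU eQ]] := pairing_form_equiv1 (unitmx_mulJT uU).
by exists g; split=> // v; rewrite eQ QuE.
Qed.

Lemma Qu_split n (u : 'M[k]_(n + n)) : u \in unitmx -> qf_split (Qu u).
Proof.
move=> uU; have [even_nn hyp] := pairing_form1_split (n + n).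
by split=> //; exact: qf_equiv_trans (Qu_equiv1 uU) hyp.
Qed.

End QuadraticForms.

Theorem mainTheorem3 (k : finFieldType) (n : nat) :
  odd #|k| -> (3 < #|k|)%N -> (0 < n)%N ->
  (forall u : 'M[k]_(n + n), u \in unitmx -> sym_tilde u = u ->
     [/\ is_quadratic_form (Qu u), qf_nondegenerate (Qu u) & qf_split (Qu u)])
  /\
  (forall u u' : 'M[k]_(n + n), u \in unitmx -> sym_tilde u = u ->
     u' \in unitmx -> sym_tilde u' = u' -> qf_equiv (Qu u) (Qu u')).
Proof.
move=> _ _ _; split=> [u uU _ | u u' uU _ u'U _].
  by split; [exact: Qu_quadratic | exact: Qu_nondegenerate | exact: Qu_split].
exact: qf_equiv_trans (Qu_equiv1 uU) (qf_equiv_sym (Qu_equiv1 u'U)).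
Qed.
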